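(* Let $$A=\begin{pmatrix}1&1&2&2\\1&0&1&2\\2&1&0&1\\2&2&1&1\end{pmatrix}.$$ Then $\operatorname{rk}(A)=\operatorname{rk}_+(A)=3$ and $\operatorname{st}_+(A)=4$.
   Context: The SNT-rank $\operatorname{st}_+(A)$ of a symmetric entrywise nonnegative $n\times n$ matrix $A$ is the minimal $k$ such that $A=BCB^T$ with $B$ an entrywise nonnegative $n\times k$ matrix and $C$ a symmetric entrywise nonnegative $k\times k$ matrix. $\operatorname{rk}_+(A)$ is the minimal $k$ such that $A=UV^T$ with $U,V$ entrywise nonnegative $n\times k$ matrices. *)

From HB Require Import structures.
From mathcomp Require Import all_boot all_order all_algebra.
From mathcomp Require Import reals.
Set Implicit Arguments. Unset Strict Implicit. Unset Printing Implicit Defensive.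
Import Order.TTheory GRing.Theory Num.Theory.
Local Open Scope ring_scope.

Definition nonneg_mx (R : realType) m n (M : 'M[R]_(m, n)) : Prop :=
  forall i j, 0 <= M i j.

Definition has_nn_fact (R : realType) n (A : 'M[R]_n) (k : nat) : Prop :=
  exists U V : 'M[R]_(n, k), nonneg_mx U /\ nonneg_mx V /\ A = U *m V^T.

Definition has_snt_fact (R : realType) n (A : 'M[R]_n) (k : nat) : Prop :=
  exists (B : 'M[R]_(n, k)) (C : 'M[R]_k),
    nonneg_mx B /\ nonneg_mx C /\ C^T = C /\ A = B *m C *m B^T.

Definition nn_rank_is (R : realType) n (A : 'M[R]_n) (r : nat) : Prop :=
  has_nn_fact A r /\ forall k, (k < r)%N -> ~ has_nn_fact A k.

Definition snt_rank_is (R : realType) n (A : 'M[R]_n) (r : nat) : Prop :=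
  has_snt_fact A r /\ forall k, (k < r)%N -> ~ has_snt_fact A k.

Definition A7 (R : realType) : 'M[R]_4 :=
  \matrix_(i < 4, j < 4)
    (nth 0%N (nth [::] [:: [:: 1; 1; 2; 2];
                           [:: 1; 0; 1; 2];
                           [:: 2; 1; 0; 1];
                           [:: 2; 2; 1; 1]]%N i) j)%:R.

From HB Require Import structures.
From mathcomp Require Import all_boot all_order all_algebra.
From mathcomp Require Import reals ring lra.
Import Order.TTheory GRing.Theory Num.Theory.
Set Implicit Arguments. Unset Strict Implicit.
Local Open Scope ring_scope.

(* A = U V^T with U, V nonnegative 4 x 3, and L A M = 3 I for explicit
   L, M, so rk A = 3.  A factorization through an inner dimension k has rank at
   most k, hence rk_+(A) = 3 and st_+(A) >= 3, while B = I, C = A gives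
   st_+(A) <= 4.

   No SNT factorization of size 3.  Suppose A = B C B^T with B nonnegative
   4 x 3 and C symmetric nonnegative 3 x 3; C is invertible because rk A = 3.
   Let x, p, q, y be the rows of B.  As A_22 = A_33 = 0, p and q are isotropic
   for the nonnegative form u^T C v; for an invertible C this puts p and q on
   coordinate axes e_i, e_j with C_ii = C_jj = 0, and i <> j since
   p^T C q = A_23 = 1.  In the coordinates (i, j, k) the remaining Gram
   equations become a polynomial system in the nonnegative unknowns, which a
   rescaling reduces to a small system of inequalities without solution. *)

Lemma mxrank_mul_inner (F : fieldType) m k n (X : 'M[F]_(m, k)) (Y : 'M[F]_(k, n)) :
  (\rank (X *m Y) <= k)%N.
Proof. exact: leq_trans (mxrankM_maxl _ _) (rank_leq_col _). Qed.

Lemma nn_fact_rank (R : realType) n (A : 'M[R]_n) k :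
  has_nn_fact A k -> (\rank A <= k)%N.
Proof. by case=> U [V [_ [_ ->]]]; apply: mxrank_mul_inner. Qed.

Lemma snt_fact_rank (R : realType) n (A : 'M[R]_n) k :
  has_snt_fact A k -> (\rank A <= k)%N.
Proof. by case=> B [C [_ [_ [_ ->]]]]; apply: mxrank_mul_inner. Qed.

Lemma snt_middle_unit (F : fieldType) n k (B : 'M[F]_(n, k)) (C : 'M[F]_k) :
  \rank (B *m C *m B^T) = k -> C \in unitmx.
Proof.
move=> rk; rewrite -row_free_unit /row_free eqn_leq rank_leq_row /= -{1}rk.
exact: leq_trans (mxrankM_maxl _ _) (mxrankM_maxr _ _).
Qed.

Lemma nat_mx_nonneg (R : realType) m n (f : 'I_m -> 'I_n -> nat) :
  nonneg_mx (\matrix_(i, j) (f i j)%:R : 'M[R]_(m, n)).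
Proof. by move=> i j; rewrite mxE ler0n. Qed.

Lemma snt_fact_id (R : realType) n (A : 'M[R]_n) :
  nonneg_mx A -> A^T = A -> has_snt_fact A n.
Proof.
move=> nA sA; exists 1%:M, A; split; first by move=> i j; rewrite mxE ler0n.
by split=> //; split=> //; rewrite trmx1 mul1mx mulmx1.
Qed.

Lemma snt_entry_axes (R : comNzRingType) n k (B : 'M[R]_(n, k)) (C : 'M[R]_k)
    a b (i j : 'I_k) :
  (forall l, l != i -> B a l = 0) -> (forall l, l != j -> B b l = 0) ->
  (B *m C *m B^T) a b = B a i * C i j * B b j.
Proof.
move=> za zb; rewrite mxE (bigD1 j) //= big1 => [|l lj]; last by rewrite !mxE zb ?mulr0.
rewrite addr0 !mxE (bigD1 i) //= big1 => [|l li]; last by rewrite za ?mul0r.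
by rewrite addr0.
Qed.

Lemma ord3_cases (l : 'I_3) : [\/ l = 0, l = 1 | l = 2].
Proof.
by case: l => [[|[|[|//]]] ?]; [constructor 1|constructor 2|constructor 3]; apply/val_inj.
Qed.

Lemma third_index (i j : 'I_3) : i != j -> exists k, (i != k) && (j != k).
Proof.
by case: (ord3_cases i) => ->; case: (ord3_cases j) => -> // _;
  [exists 2 | exists 1 | exists 2 | exists 0 | exists 1 | exists 0].
Qed.

Lemma sum_ord3 (V : nmodType) (f : 'I_3 -> V) (i j k : 'I_3) :
  i != j -> i != k -> j != k -> \sum_(l < 3) f l = f i + f j + f k.
Proof.
have -> : \sum_(l < 3) f l = f 0 + f 1 + f 2.
  by rewrite !big_ord_recl big_ord0 addr0 addrA; congr (_ + f _ + f _); apply/val_inj.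
case: (ord3_cases i) => ->; case: (ord3_cases j) => ->;
  case: (ord3_cases k) => -> //= _ _ _.
- by rewrite addrAC.
- by rewrite [f 1 + _]addrC.
- by rewrite [RHS]addrC addrA.
- by rewrite addrC addrA.
- by rewrite addrC [f 0 + _]addrC addrA.
Qed.

(* The bilinear form u^T C v of a symmetric 3 x 3 matrix C, written with its
   six coefficients, and the determinant of such a C. *)
Definition bil (R : comNzRingType) (c00 c01 c02 c11 c12 c22 u0 u1 u2 v0 v1 v2 : R) :=
  u0 * (c00 * v0 + c01 * v1 + c02 * v2) + u1 * (c01 * v0 + c11 * v1 + c12 * v2)
  + u2 * (c02 * v0 + c12 * v1 + c22 * v2).

Definition det3s (R : comNzRingType) (c00 c01 c02 c11 c12 c22 : R) :=
  c00 * (c11 * c22 - c12 * c12) - c01 * (c01 * c22 - c12 * c02)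
  + c02 * (c01 * c12 - c11 * c02).

Lemma snt_entry3 (R : comNzRingType) n (B : 'M[R]_(n, 3)) (C : 'M[R]_3) (i j k : 'I_3) :
  C^T = C -> i != j -> i != k -> j != k -> forall a b,
  (B *m C *m B^T) a b = bil (C i i) (C i j) (C i k) (C j j) (C j k) (C k k)
                            (B a i) (B a j) (B a k) (B b i) (B b j) (B b k).
Proof.
move=> sC ij ik jk a b; have Csym l m : C m l = C l m by rewrite -{1}sC mxE.
rewrite mxE (sum_ord3 _ ij ik jk) !mxE !(sum_ord3 _ ij ik jk) ?mxE.
by rewrite (Csym i j) (Csym i k) (Csym j k) /bil; ring.
Qed.

Lemma det3 (R : comNzRingType) (C : 'M[R]_3) : \det C =
  C 0 0 * (C 1 1 * C 2 2 - C 1 2 * C 2 1)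
  - C 0 1 * (C 1 0 * C 2 2 - C 1 2 * C 2 0)
  + C 0 2 * (C 1 0 * C 2 1 - C 1 1 * C 2 0).
Proof.
(* Read the entries through natural-number indices, so that the ordinals
   produced by the expansion compute to numerals. *)
have [c E] : exists c : nat -> nat -> R, forall l m : 'I_3, C l m = c l m.
  by exists (fun a b => C (inord a) (inord b)) => l m; rewrite !inord_val.
rewrite (expand_det_row _ 0) !big_ord_recl big_ord0 /cofactor.
rewrite !(expand_det_row _ 0) !big_ord_recl !big_ord0 /cofactor !det_mx11 !mxE !E /=.
ring.
Qed.

Lemma det3_sym (R : comNzRingType) (C : 'M[R]_3) :
  C^T = C -> \det C = det3s (C 0 0) (C 0 1) (C 0 2) (C 1 1) (C 1 2) (C 2 2).
Proof.
move=> sC; have Csym l m : C m l = C l m by rewrite -{1}sC mxE.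
by rewrite det3 (Csym 0 1) (Csym 0 2) (Csym 1 2) /det3s; ring.
Qed.

Lemma isotropic_terms3 (R : realFieldType) (c00 c01 c02 c11 c12 c22 p0 p1 p2 : R) :
  0 <= c00 -> 0 <= c01 -> 0 <= c02 -> 0 <= c11 -> 0 <= c12 -> 0 <= c22 ->
  0 <= p0 -> 0 <= p1 -> 0 <= p2 ->
  bil c00 c01 c02 c11 c12 c22 p0 p1 p2 p0 p1 p2 = 0 ->
  [/\ p0 * p0 * c00 = 0, p1 * p1 * c11 = 0 & p2 * p2 * c22 = 0] /\
  [/\ p0 * p1 * c01 = 0, p0 * p2 * c02 = 0 & p1 * p2 * c12 = 0].
Proof.
move=> q00 q01 q02 q11 q12 q22 r0 r1 r2 hB.
have g00 : 0 <= p0 * p0 * c00 by rewrite !mulr_ge0.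
have g11 : 0 <= p1 * p1 * c11 by rewrite !mulr_ge0.
have g22 : 0 <= p2 * p2 * c22 by rewrite !mulr_ge0.
have g01 : 0 <= p0 * p1 * c01 by rewrite !mulr_ge0.
have g02 : 0 <= p0 * p2 * c02 by rewrite !mulr_ge0.
have g12 : 0 <= p1 * p2 * c12 by rewrite !mulr_ge0.
have hB' : p0 * p0 * c00 + p1 * p1 * c11 + p2 * p2 * c22 + 2 * (p0 * p1 * c01)
   + 2 * (p0 * p2 * c02) + 2 * (p1 * p2 * c12) = 0 by rewrite -[RHS]hB /bil; ring.
by split; split; lra.
Qed.

(* A nonzero nonnegative isotropic vector p of a nonnegative symmetric 3 x 3
   form with nonzero determinant lies on a coordinate axis e_i with C_ii = 0:
   all terms p_l C_lm p_m vanish, and two nonzero coordinates would make a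
   2 x 2 principal block of C vanish, killing the determinant. *)
Lemma isotropic_support3 (R : realFieldType) (c00 c01 c02 c11 c12 c22 p0 p1 p2 : R) :
  0 <= c00 -> 0 <= c01 -> 0 <= c02 -> 0 <= c11 -> 0 <= c12 -> 0 <= c22 ->
  0 <= p0 -> 0 <= p1 -> 0 <= p2 ->
  det3s c00 c01 c02 c11 c12 c22 != 0 ->
  bil c00 c01 c02 c11 c12 c22 p0 p1 p2 p0 p1 p2 = 0 ->
  ~ (p0 = 0 /\ p1 = 0 /\ p2 = 0) ->
  [\/ p1 = 0 /\ p2 = 0 /\ c00 = 0,
      p0 = 0 /\ p2 = 0 /\ c11 = 0 |
      p0 = 0 /\ p1 = 0 /\ c22 = 0].
Proof.
move=> q00 q01 q02 q11 q12 q22 r0 r1 r2 hD hB hnz.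
have [[z00 z11 z22] [z01 z02 z12]] := isotropic_terms3 q00 q01 q02 q11 q12 q22 r0 r1 r2 hB.
have mz (a b c : R) : a != 0 -> b != 0 -> a * b * c = 0 -> c = 0.
  by move=> ha hb /eqP; rewrite !mulf_eq0 (negbTE ha) (negbTE hb) => /eqP.
have [h0|h0] := eqVneq p0 0.
- have [h1|h1] := eqVneq p1 0.
  + have [h2|h2] := eqVneq p2 0; first by exfalso; apply: hnz.
    by constructor 3; split => //; split => //; exact: (mz _ _ _ h2 h2 z22).
  + have e11 := mz _ _ _ h1 h1 z11.
    have [h2|h2] := eqVneq p2 0; first by constructor 2.
    have e22 := mz _ _ _ h2 h2 z22; have e12 := mz _ _ _ h1 h2 z12.
    by exfalso; move/eqP: hD; apply; rewrite /det3s e11 e22 e12; ring.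
- have e00 := mz _ _ _ h0 h0 z00.
  have [h1|h1] := eqVneq p1 0.
  + have [h2|h2] := eqVneq p2 0; first by constructor 1.
    have e22 := mz _ _ _ h2 h2 z22; have e02 := mz _ _ _ h0 h2 z02.
    by exfalso; move/eqP: hD; apply; rewrite /det3s e00 e22 e02; ring.
  + have e11 := mz _ _ _ h1 h1 z11; have e01 := mz _ _ _ h0 h1 z01.
    by exfalso; move/eqP: hD; apply; rewrite /det3s e00 e11 e01; ring.
Qed.

(* The same fact for a row of B in a factorization B C B^T with C invertible;
   the row is nonzero as soon as it pairs nontrivially with some row. *)
Lemma isotropic_row_axis (R : realType) n (B : 'M[R]_(n, 3)) (C : 'M[R]_3) a b :
  nonneg_mx B -> nonneg_mx C -> C^T = C -> C \in unitmx ->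
  (B *m C *m B^T) a a = 0 -> (B *m C *m B^T) a b != 0 ->
  exists i, C i i = 0 /\ forall l, l != i -> B a l = 0.
Proof.
move=> nB nC sC uC iso nz.
have ent := snt_entry3 B sC (isT : 0 != 1 :> 'I_3) (isT : 0 != 2 :> 'I_3) (isT : 1 != 2 :> 'I_3).
have dC : det3s (C 0 0) (C 0 1) (C 0 2) (C 1 1) (C 1 2) (C 2 2) != 0.
  by rewrite -det3_sym // -unitfE -unitmxE.
have nzrow : ~ (B a 0 = 0 /\ B a 1 = 0 /\ B a 2 = 0).
  by case=> z0 [z1 z2]; move: nz; rewrite ent z0 z1 z2 /bil !mul0r !add0r eqxx.
rewrite ent in iso.
case: (isotropic_support3 (nC 0 0) (nC 0 1) (nC 0 2) (nC 1 1) (nC 1 2) (nC 2 2)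
  (nB a 0) (nB a 1) (nB a 2) dC iso nzrow)
  => [[z1 [z2 c0]] | [z0 [z2 c1]] | [z0 [z1 c2]]];
  [exists 0 | exists 1 | exists 2]; split=> // l;
  by case: (ord3_cases l) => ->.
Qed.

(* The reduced system: its first two equations force 2 s <= 1, 3 t <= 1,
   4 s' <= 1 and 2 t' <= 1, which is incompatible with the third equation
   once 2 X <= P + Q. *)
Lemma reduced_system_infeasible (R : realFieldType) (s t s' t' P Q X : R) :
  0 <= s -> 0 <= t -> 0 <= s' -> 0 <= t' -> 0 <= P -> 0 <= Q ->
  t <= 1 -> s <= 2 -> t' <= 2 -> s' <= 1 ->
  P + 2 * s + 4 * t - 2 * s * t = 1 ->
  Q + 4 * s' + 2 * t' - 2 * s' * t' = 1 ->
  2 * s + s' + t + 2 * t' - t * s' - s * t' + X = 2 ->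
  2 * X <= P + Q -> False.
Proof.
move=> s0 t0 s'0 t'0 P0 Q0 t1 s2 t'2 s'1 HP HQ HX HXPQ.
have hs : s <= 1 / 2 by nra.
have ht : 3 * t <= 1 by nra.
have hs' : s' <= 1 / 4 by nra.
have ht' : 2 * t' <= 1 by nra.
nra.
Qed.

(* The Gram equations of A for rows x, p = al e_1, q = be e_2, y in the basis
   where C_11 = C_22 = 0, C_12 = a, C_13 = b, C_23 = c, C_33 = d.  Rescaling the
   first two coordinates of x and y by s = be a x_1, t = al a x_2 (and s', t'
   for y) reduces them to the system above, with P, Q, X the d-terms of x^T C x,
   y^T C y, x^T C y and 2 X <= P + Q because d (x_3 - y_3)^2 >= 0. *)
Lemma axis_gram_infeasible (R : realFieldType) (al be xp xq xr yp yq yr a b c d : R) :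
  0 <= al -> 0 <= be -> 0 <= xp -> 0 <= xq -> 0 <= xr ->
  0 <= yp -> 0 <= yq -> 0 <= yr -> 0 <= a -> 0 <= b -> 0 <= c -> 0 <= d ->
  al * be * a = 1 ->
  al * (a * xq + b * xr) = 1 -> be * (a * xp + c * xr) = 2 ->
  al * (a * yq + b * yr) = 2 -> be * (a * yp + c * yr) = 1 ->
  2 * a * xp * xq + 2 * b * xp * xr + 2 * c * xq * xr + d * xr ^+ 2 = 1 ->
  2 * a * yp * yq + 2 * b * yp * yr + 2 * c * yq * yr + d * yr ^+ 2 = 1 ->
  a * (xp * yq + xq * yp) + b * (xp * yr + xr * yp) + c * (xq * yr + xr * yq)
    + d * xr * yr = 2 -> False.
Proof.
move=> ? ? ? ? ? ? ? ? ? ? ? ? Hab H1 H2 H3 H4 Qx Qy Bxy.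
pose s := be * a * xp; pose t := al * a * xq.
pose s' := be * a * yp; pose t' := al * a * yq.
have u1 : al * b * xr = 1 - t by rewrite /t; lra.
have u2 : be * c * xr = 2 - s by rewrite /s; lra.
have v1 : al * b * yr = 2 - t' by rewrite /t'; lra.
have v2 : be * c * yr = 1 - s' by rewrite /s'; lra.
(* Multiplying by al be a = 1 expresses every monomial through s, t, s', t'. *)
have K z : z = z * (al * be * a) by rewrite Hab mulr1.
have i1 : 2 * a * xp * xq = 2 * (s * t) by rewrite /s /t [LHS]K; ring.
have i2 : 2 * b * xp * xr = 2 * (s * (1 - t)) by rewrite -u1 /s [LHS]K; ring.
have i3 : 2 * c * xq * xr = 2 * (t * (2 - s)) by rewrite -u2 /t [LHS]K; ring.
have j1 : 2 * a * yp * yq = 2 * (s' * t') by rewrite /s' /t' [LHS]K; ring.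
have j2 : 2 * b * yp * yr = 2 * (s' * (2 - t')) by rewrite -v1 /s' [LHS]K; ring.
have j3 : 2 * c * yq * yr = 2 * (t' * (1 - s')) by rewrite -v2 /t' [LHS]K; ring.
have k1 : a * (xp * yq + xq * yp) = s * t' + t * s'
  by rewrite /s /t /s' /t' [LHS]K; ring.
have k2 : b * (xp * yr + xr * yp) = s * (2 - t') + s' * (1 - t)
  by rewrite -v1 -u1 /s /s' [LHS]K; ring.
have k3 : c * (xq * yr + xr * yq) = t * (1 - s') + t' * (2 - s)
  by rewrite -v2 -u2 /t /t' [LHS]K; ring.
apply: (@reduced_system_infeasible R s t s' t' (d * xr ^+ 2) (d * yr ^+ 2) (d * xr * yr)).
all: rewrite ?mulr_ge0 ?sqr_ge0 //.
1-4: by rewrite -subr_ge0 -?u1 -?u2 -?v1 -?v2 !mulr_ge0.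
- by rewrite -[RHS]Qx i1 i2 i3; ring.
- by rewrite -[RHS]Qy j1 j2 j3; ring.
- by rewrite -[RHS]Bxy k1 k2 k3; ring.
- have : 0 <= d * (xr - yr) ^+ 2 by rewrite mulr_ge0 ?sqr_ge0.
  nra.
Qed.

Lemma axis_snt_infeasible (R : realFieldType)
    (a b c d x0 x1 x2 p0 p1 p2 q0 q1 q2 y0 y1 y2 : R) :
  0 <= a -> 0 <= b -> 0 <= c -> 0 <= d -> 0 <= x0 -> 0 <= x1 -> 0 <= x2 ->
  0 <= p0 -> 0 <= q1 -> 0 <= y0 -> 0 <= y1 -> 0 <= y2 ->
  p1 = 0 -> p2 = 0 -> q0 = 0 -> q2 = 0 ->
  bil 0 a b 0 c d x0 x1 x2 x0 x1 x2 = 1 -> bil 0 a b 0 c d x0 x1 x2 p0 p1 p2 = 1 ->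
  bil 0 a b 0 c d x0 x1 x2 q0 q1 q2 = 2 -> bil 0 a b 0 c d x0 x1 x2 y0 y1 y2 = 2 ->
  bil 0 a b 0 c d p0 p1 p2 q0 q1 q2 = 1 -> bil 0 a b 0 c d p0 p1 p2 y0 y1 y2 = 2 ->
  bil 0 a b 0 c d q0 q1 q2 y0 y1 y2 = 1 -> bil 0 a b 0 c d y0 y1 y2 y0 y1 y2 = 1 ->
  False.
Proof.
move=> na nb nc nd nx0 nx1 nx2 np0 nq1 ny0 ny1 ny2 -> -> -> ->.
move=> Exx Exp Exq Exy Epq Epy Eqy Eyy.
have Hpq : p0 * q1 * a = 1 by rewrite -[RHS]Epq /bil; ring.
have Hxp : p0 * (a * x1 + b * x2) = 1 by rewrite -[RHS]Exp /bil; ring.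
have Hxq : q1 * (a * x0 + c * x2) = 2 by rewrite -[RHS]Exq /bil; ring.
have Hpy : p0 * (a * y1 + b * y2) = 2 by rewrite -[RHS]Epy /bil; ring.
have Hqy : q1 * (a * y0 + c * y2) = 1 by rewrite -[RHS]Eqy /bil; ring.
have Hxx : 2 * a * x0 * x1 + 2 * b * x0 * x2 + 2 * c * x1 * x2 + d * x2 ^+ 2 = 1
  by rewrite -[RHS]Exx /bil; ring.
have Hyy : 2 * a * y0 * y1 + 2 * b * y0 * y2 + 2 * c * y1 * y2 + d * y2 ^+ 2 = 1
  by rewrite -[RHS]Eyy /bil; ring.
have Hxy : a * (x0 * y1 + x1 * y0) + b * (x0 * y2 + x2 * y0) + c * (x1 * y2 + x2 * y1)
    + d * x2 * y2 = 2 by rewrite -[RHS]Exy /bil; ring.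
exact: (axis_gram_infeasible np0 nq1 nx0 nx1 nx2 ny0 ny1 ny2 na nb nc nd
  Hpq Hxp Hxq Hpy Hqy Hxx Hyy Hxy).
Qed.

Definition U7 (R : realType) : 'M[R]_(4, 3) :=
  \matrix_(i < 4, j < 3)
    (nth 0%N (nth [::] [:: [:: 1; 0; 1]; [:: 1; 0; 0]; [:: 0; 1; 0]; [:: 0; 1; 1]]%N i) j)%:R.
Definition V7 (R : realType) : 'M[R]_(4, 3) :=
  \matrix_(i < 4, j < 3)
    (nth 0%N (nth [::] [:: [:: 1; 2; 0]; [:: 0; 1; 1]; [:: 1; 0; 1]; [:: 2; 1; 0]]%N i) j)%:R.
Definition L7 (R : realType) : 'M[R]_(3, 4) :=
  \matrix_(i < 3, j < 4) (i == j :> nat)%:R.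
Definition M7 (R : realType) : 'M[R]_(4, 3) :=
  \matrix_(i < 4, j < 3)
    (nth 0%Z (nth [::] [:: [:: -1; 2; 1]; [:: 2; -4; 1]; [:: 1; 1; -1]; [:: 0; 0; 0]]%Z i) j)%:~R.

Lemma A7_UV (R : realType) : A7 R = U7 R *m (V7 R)^T.
Proof.
apply/matrixP => i j; rewrite !(mxE, big_ord_recr, big_ord0) /=.
by case: i => [[|[|[|[|i]]]] hi] //; case: j => [[|[|[|[|j]]]] hj] //=; ring.
Qed.

Lemma A7_LM (R : realType) : L7 R *m A7 R *m M7 R = 3%:M.
Proof.
apply/matrixP => i j; rewrite !(mxE, big_ord_recr, big_ord0) /=.
by case: i => [[|[|[|i]]] hi] //; case: j => [[|[|[|j]]] hj] //=; ring.
Qed.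

Lemma A7_rank (R : realType) : \rank (A7 R) = 3%N.
Proof.
apply/eqP; rewrite eqn_leq {1}A7_UV mxrank_mul_inner /=.
have r3 : \rank (3%:M : 'M[R]_3) = 3%N.
  by apply: mxrank_unit; rewrite unitmxE det_scalar unitfE expf_neq0 // pnatr_eq0.
rewrite -[X in (X <= _)%N]r3 -(A7_LM R).
exact: leq_trans (mxrankM_maxl _ _) (mxrankM_maxr _ _).
Qed.

Lemma A7_sym (R : realType) : (A7 R)^T = A7 R.
Proof.
apply/matrixP => i j; rewrite !mxE.
by case: i => [[|[|[|[|i]]]] hi] //; case: j => [[|[|[|[|j]]]] hj].
Qed.

Lemma A7_no_snt3 (R : realType) : ~ has_snt_fact (A7 R) 3.
Proof.
case=> B [C [nB [nC [sC E]]]].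
have uC : C \in unitmx by apply: (@snt_middle_unit _ _ _ B); rewrite -E A7_rank.
(* Rows 2 and 3 of B are isotropic and pair to A_23 = 1. *)
have [i [Cii B1]] : exists i, C i i = 0 /\ forall l, l != i -> B 1 l = 0.
  by apply: (isotropic_row_axis (b := 2)); rewrite // -E mxE ?pnatr_eq0.
have [j [Cjj B2]] : exists j, C j j = 0 /\ forall l, l != j -> B 2 l = 0.
  by apply: (isotropic_row_axis (b := 1)); rewrite // -E mxE ?pnatr_eq0.
have ij : i != j.
  apply/eqP => eij; have := snt_entry_axes C B1 B2.
  by rewrite -E mxE -eij Cii mulr0 mul0r => /eqP; rewrite oner_eq0.
have [k /andP[ik jk]] := third_index ij.
have [ji ki kj] : [/\ j != i, k != i & k != j] by rewrite !(eq_sym k) eq_sym.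
have gram a b : A7 R a b = bil 0 (C i j) (C i k) 0 (C j k) (C k k)
    (B a i) (B a j) (B a k) (B b i) (B b j) (B b k).
  by rewrite E (snt_entry3 _ sC ij ik jk) Cii Cjj.
apply: (axis_snt_infeasible (nC i j) (nC i k) (nC j k) (nC k k)
  (nB 0 i) (nB 0 j) (nB 0 k) (nB 1 i) (nB 2 j) (nB 3 i) (nB 3 j) (nB 3 k)
  (B1 j ji) (B1 k ki) (B2 i ij) (B2 k kj)).
all: by rewrite -gram mxE.
Qed.

Theorem mainTheorem7 (R : realType) :
  \rank (A7 R) = 3%N /\ nn_rank_is (A7 R) 3 /\ snt_rank_is (A7 R) 4.
Proof.
have rk := A7_rank R.
split=> //; split; split.
- exists (U7 R), (V7 R); rewrite -A7_UV /U7 /V7.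
  by split; [|split]; first [exact: nat_mx_nonneg | done].
- by move=> k hk /nn_fact_rank; rewrite rk leqNgt hk.
- by apply: snt_fact_id; [exact: nat_mx_nonneg | exact: A7_sym].
- move=> k; rewrite ltnS leq_eqVlt => /orP[/eqP-> | hk]; first exact: A7_no_snt3.
  by move/snt_fact_rank; rewrite rk leqNgt hk.
Qed.
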